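(* Let $r\ge3$. For any partition $\mathcal{Q}$ of $[r]=\{1,\dots,r\}$ with $|\mathcal{Q}|\ge2$, there exists a bijection $\tau:\mathfrak{P}_{[r]}\to\mathfrak{P}_{[r]}$ such that $|\tau(\mathcal{P})|\equiv|\mathcal{P}|+1\pmod 2$ for every $\mathcal{P}\in\mathfrak{P}_{[r]}$, and $\widetilde\psi^{\mathcal{Q}}\circ\tau=\widetilde\psi^{\mathcal{Q}}$ for every $\psi:2^{[r]}\to\mathbb{R}$ with $\psi(\emptyset)=1$.
   Context: $\mathfrak{P}_{[r]}$ is the set of cyclically ordered partitions of $[r]$ (partitions into non-empty blocks with a cyclic order on the blocks; two such are equal if they have the same blocks and the same cyclic order), $|\mathcal{P}|$ the number of blocks. For a partition $\mathcal{Q}$ of $[r]$, $\psi^{\mathcal{Q}}(I)=\prod_{J\in\mathcal{Q}}\psi(I\cap J)$ and $\widetilde\psi^{\mathcal{Q}}(\mathcal{P})=\prod_{I\in\mathcal{P}}\psi^{\mathcal{Q}}(I)$. *)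

From HB Require Import structures.
From mathcomp Require Import all_boot all_order all_algebra all_fingroup.
From mathcomp Require Import Rstruct.
From Stdlib Require Import Reals.
Set Implicit Arguments. Unset Strict Implicit. Unset Printing Implicit Defensive.
Import GRing.Theory.
Local Open Scope ring_scope.

(* A cyclically ordered partition of [r] = 'I_r is a pair (P, s) where P is a
   partition of [r] into non-empty blocks and s is a permutation of the blocks
   that is a single cycle on P (every block reaches every other by iterating s)
   and fixes every set outside P.  Cyclic orders on a finite set P correspond
   bijectively to such cyclic permutations, so two such objects are equal iff
   they have the same blocks and the same cyclic order. *)
Definition is_coPart (r : nat) (Ps : {set {set 'I_r}} * {perm {set 'I_r}}) : bool :=
  [&& partition Ps.1 [set: 'I_r],
      [forall X, (X \notin Ps.1) ==> (Ps.2 X == X)] &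
      [forall X in Ps.1, forall Y in Ps.1, fconnect Ps.2 X Y]].

Definition coPart (r : nat) := {Ps : {set {set 'I_r}} * {perm {set 'I_r}} | is_coPart Ps}.

Definition blocks (r : nat) (P : coPart r) : {set {set 'I_r}} := (sval P).1.

Definition psiQ (r : nat) (psi : {set 'I_r} -> R) (Q : {set {set 'I_r}})
  (I : {set 'I_r}) : R := (\prod_(J in Q) psi (I :&: J)).

Definition tpsiQ (r : nat) (psi : {set 'I_r} -> R) (Q : {set {set 'I_r}})
  (P : coPart r) : R := (\prod_(I in blocks P) psiQ psi Q I).

From mathcomp Require Import all_boot all_order all_algebra all_fingroup.
From mathcomp Require Import Rstruct.
From Stdlib Require Import Reals.
Import GRing.Theory.
Set Implicit Arguments. Unset Strict Implicit. Unset Printing Implicit Defensive.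

(* Fix a point z and let V be the block of Q containing z.  Cutting the cycle
   of blocks just before the block of z linearises a cyclically ordered
   partition into a sequence of blocks.  Scan it from the left and act at the
   first place where a block meets both V and its complement (split it into
   its parts inside and outside V) or a block inside V is followed by a block
   disjoint from V (merge the two).  This is an involution changing the number
   of blocks by one, and such a place exists: the first block meets V and,
   since Q has another block, some block is not inside V.  When psi(empty) = 1,
   psi^Q(B) = psi^Q(B cap V) psi^Q(B \ V) because Q refines {V, ~V}, so the
   involution preserves tilde psi^Q. *)

Section SplitMerge.
Variables (T : finType) (V : {set T}).

Definition straddles (B : {set T}) := ~~ (B \subset V) && ~~ [disjoint B & V].

Fixpoint split_merge (L : seq {set T}) : seq {set T} :=
  match L with
  | [::] => [::]
  | B :: L' =>
    if straddles B then [:: B :&: V, B :\: V & L'] else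
    match L' with
    | [::] => [:: B]
    | C :: L'' =>
      if (B \subset V) && [disjoint C & V] then (B :|: C) :: L''
      else B :: split_merge L'
    end
  end.

Lemma split_merge_cons2 (B C : {set T}) L : ~~ straddles B ->
  split_merge [:: B, C & L] =
  if (B \subset V) && [disjoint C & V] then (B :|: C) :: L
  else B :: split_merge (C :: L).
Proof. by move=> /negbTE nsB; rewrite [LHS]/= nsB. Qed.

Lemma split_merge_nil L : (split_merge L == [::]) = (L == [::]).
Proof. by case: L => [|B [|C L]] //=; do 2?case: ifP. Qed.

Lemma setUI_sub_disjoint (B C : {set T}) : B \subset V -> [disjoint C & V] ->
  (B :|: C) :&: V = B.
Proof.
by move=> /setIidPl sBV /disjoint_setI0 dCV; rewrite setIUl sBV dCV setU0.
Qed.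

Lemma setUD_sub_disjoint (B C : {set T}) : B \subset V -> [disjoint C & V] ->
  (B :|: C) :\: V = C.
Proof.
move=> sBV /setDidPl dCV; apply/eqP.
by rewrite setDUl dCV (eqP (_ : B :\: V == set0)) ?set0U ?setD_eq0.
Qed.

Lemma disjoint_setDl (B : {set T}) : [disjoint B :\: V & V].
Proof. by rewrite disjoints_subset setDE subsetIr. Qed.

Lemma mem_head_split_merge (x : T) L : x \in V ->
  x \in head set0 L -> x \in head set0 (split_merge L).
Proof.
move=> xV; case: L => [|B [|C L]] //= xB;
  case: ifP => _ /=; rewrite ?inE ?xB ?xV //.
by case: ifP => _; rewrite /= ?inE xB.
Qed.

Lemma head_split_merge_meets L : ~~ [disjoint head set0 L & V] ->
  ~~ [disjoint head set0 (split_merge L) & V].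
Proof.
rewrite -!setI_eq0 => /set0Pn[x]; rewrite inE => /andP[xL xV].
by apply/set0Pn; exists x; rewrite inE xV mem_head_split_merge.
Qed.

Lemma split_mergeK L : set0 \notin L -> split_merge (split_merge L) = L.
Proof.
elim: L => [|B L IH] //; rewrite in_cons negb_or eq_sym => /andP[nzB nzL] /=.
case: ifP => [_|nstB].
  rewrite split_merge_cons2 /straddles ?subsetIr //= disjoint_setDl.
  by rewrite setID.
case: L IH nzL => [|C L] IH nzL; first by rewrite /= nstB.
case: ifP => [/andP[sBV dCV]|noMerge].
  have nzC : C != set0 by apply: contraNneq nzL => <-; apply: mem_head.
  have stBC : straddles (B :|: C).
    rewrite /straddles -setI_eq0 setUI_sub_disjoint //= nzB andbT.
    apply: contra nzC => sBCV.
    rewrite -subset0 -(disjoint_setI0 dCV) subsetI subxx.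
    by apply: subset_trans sBCV; apply: subsetUr.
  by rewrite /= stBC setUI_sub_disjoint // setUD_sub_disjoint.
have: split_merge (C :: L) != [::] by rewrite split_merge_nil.
have headCV : (B \subset V) -> ~~ [disjoint head set0 (split_merge (C :: L)) & V].
  move=> sBV; apply: head_split_merge_meets.
  by move: noMerge; rewrite sBV => /negbT.
case E: (split_merge (C :: L)) headCV => [|C' L'] // headCV _.
rewrite split_merge_cons2 ?nstB // -E IH //.
by case: (B \subset V) headCV => // /(_ isT) /negbTE ->.
Qed.

Lemma split_merge_nonempty L : set0 \notin L -> set0 \notin split_merge L.
Proof.
elim: L => [|B L IH] //; rewrite in_cons negb_or eq_sym => /andP[nzB nzL] /=.
case: ifP => [/andP[nsBV meetBV]|_].
  by rewrite !in_cons !negb_or ![set0 == _]eq_sym setI_eq0 meetBV setD_eq0 nsBV.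
case: L IH nzL => [|C L] IH nzL; first by rewrite mem_seq1 eq_sym.
case: ifP => _; rewrite in_cons negb_or eq_sym; last by rewrite nzB IH.
move: nzL; rewrite in_cons negb_or => /andP[_ ->].
rewrite andbT -!subset0 in nzB *.
by apply: contra nzB; apply: subset_trans; apply: subsetUl.
Qed.

Lemma count_mem_split_merge (x : T) L :
  count (fun B : {set T} => x \in B) (split_merge L) =
  count (fun B : {set T} => x \in B) L.
Proof.
elim: L => [|B L IH] //=.
case: ifP => _; first by rewrite /= !inE addnA; case: (x \in B); case: (x \in V).
case: L IH => [|C L] IH //=.
case: ifP => [/andP[sBV dCV]|_] /=; last by rewrite IH.
rewrite inE addnA; case xB: (x \in B) => //=.
by rewrite (disjointFl dCV) // (subsetP sBV).
Qed.

Lemma odd_size_split_merge L :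
  ~~ [disjoint head set0 L & V] -> has (fun B : {set T} => ~~ (B \subset V)) L ->
  odd (size (split_merge L)) = ~~ odd (size L).
Proof.
elim: L => [|B L IH] //= meetBV.
case: ifP => [_|nstB]; first by rewrite /= negbK.
have sBV : B \subset V by move: nstB; rewrite /straddles meetBV andbT => /negbFE.
case/orP => [/negP//|hasL]; case: L IH hasL => [|C L] IH //= hasL.
case: ifP => [_|noMerge] /=; first by rewrite negbK.
by rewrite IH //; move: noMerge; rewrite sBV => /negbT.
Qed.

Local Open Scope ring_scope.

Lemma big_split_merge (R : pzSemiRingType) (F : {set T} -> R) L :
  (forall X, F X = F (X :&: V) * F (X :\: V)) ->
  \prod_(I <- split_merge L) F I = \prod_(I <- L) F I.
Proof.
move=> FV; elim: L => [|B L IH] //.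
have [stB|nstB] := boolP (straddles B).
  by rewrite /= stB !big_cons mulrA -FV.
case: L IH => [|C L] IH; first by rewrite /= (negbTE nstB).
rewrite split_merge_cons2 //.
case: ifP => [/andP[sBV dCV]|_]; last by rewrite [LHS]big_cons IH [RHS]big_cons.
by rewrite !big_cons FV setUI_sub_disjoint // setUD_sub_disjoint // mulrA.
Qed.
End SplitMerge.

Lemma count_eq1_eq (T : eqType) (p : pred T) (s : seq T) (a b : T) :
  count p s = 1 -> a \in s -> b \in s -> p a -> p b -> a = b.
Proof.
rewrite -size_filter => one_p sa sb pa pb.
have: a \in filter p s by rewrite mem_filter pa sa.
have: b \in filter p s by rewrite mem_filter pb sb.
by case: (filter p s) one_p => [|c [|]] // _; rewrite !inE => /eqP-> /eqP->.
Qed.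

Section ExactCover.
Variable T : finType.

Definition exact_cover (L : seq {set T}) :=
  (set0 \notin L) && [forall x, count (fun B : {set T} => x \in B) L == 1].

Lemma exact_cover_count L x : exact_cover L ->
  count (fun B : {set T} => x \in B) L = 1.
Proof. by case/andP => _ /forallP/(_ x)/eqP. Qed.

Lemma exact_cover_uniq L : exact_cover L -> uniq L.
Proof.
move=> coverL; have [nzL _] := andP coverL; apply: count_mem_uniq => B.
have [BL|/count_memPn -> //] := boolP (B \in L).
have [x xB] : exists x, x \in B by apply/set0Pn; apply: contraNneq nzL => <-.
apply/eqP; rewrite /= eqn_leq -has_count has_pred1 BL andbT.
by rewrite -(exact_cover_count x coverL); apply: sub_count => C /eqP ->.
Qed.

Lemma exact_cover_partition L : exact_cover L -> partition [set X in L] [set: T].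
Proof.
move=> coverL; have [nzL _] := andP coverL; apply/and3P; split.
- apply/eqP/setP => x; rewrite inE; apply/bigcupP.
  have /hasP[B BL xB] : has (fun B : {set T} => x \in B) L.
    by rewrite has_count (exact_cover_count x coverL).
  by exists B; rewrite ?inE.
- apply/trivIsetP => A B; rewrite !inE => AL BL neqAB.
  rewrite -setI_eq0; apply: contraNT neqAB => /set0Pn[x].
  rewrite inE => /andP[xA xB].
  by apply/eqP; apply: (count_eq1_eq (exact_cover_count x coverL)).
- by rewrite inE.
Qed.

Lemma exact_cover_split_merge (V : {set T}) L :
  exact_cover L -> exact_cover (split_merge V L).
Proof.
move=> coverL; have [nzL _] := andP coverL.
rewrite /exact_cover split_merge_nonempty //=; apply/forallP => x.
by rewrite count_mem_split_merge (exact_cover_count x coverL).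
Qed.

Definition next_perm (L : seq T) : {perm T} :=
  perm (can_inj (prev_next (undup_uniq L))).

Lemma next_permE L : uniq L -> next_perm L =1 next L.
Proof. by move=> uL X; rewrite permE undup_id. Qed.

Lemma fcycle_next_perm L : uniq L -> fcycle (next_perm L) L.
Proof.
move=> uL; rewrite (@eq_cycle _ _ (frel (next L))) ?cycle_next //.
by move=> a b; rewrite /= next_permE.
Qed.
End ExactCover.

Section CutSeq.
Variables (r : nat) (z : 'I_r).

Definition rooted_cover (L : seq {set 'I_r}) :=
  exact_cover L && (z \in head set0 L).

Definition coPart_of_seq (L : seq {set 'I_r}) := ([set X in L], next_perm L).

Definition cut_seq (P : coPart r) : seq {set 'I_r} :=
  fingraph.orbit (sval P).2 (pblock (blocks P) z).

Lemma is_coPart_of_seq L : exact_cover L -> is_coPart (coPart_of_seq L).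
Proof.
move=> coverL; have uL := exact_cover_uniq coverL.
apply/and3P; split => /=; first exact: exact_cover_partition.
  apply/forallP => X; apply/implyP; rewrite inE => XnL.
  by rewrite next_permE // next_nth (negbTE XnL).
apply/forallP => X; apply/implyP; rewrite inE => XL.
apply/forallP => Y; apply/implyP; rewrite inE => YL.
by rewrite (fconnect_cycle (fcycle_next_perm uL) XL) YL.
Qed.

Lemma cut_seq_insubd P0 L : rooted_cover L ->
  cut_seq (insubd P0 (coPart_of_seq L)) = L.
Proof.
case/andP=> coverL; rewrite /cut_seq /blocks insubdK /=; last first.
  exact: is_coPart_of_seq.
have uL := exact_cover_uniq coverL.
have [_ trivL _] := and3P (exact_cover_partition coverL).
case: L coverL uL trivL => [|B L] coverL uL trivL zB; first by rewrite inE in zB.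
have BL : B \in [set X in B :: L] by rewrite inE mem_head.
rewrite (def_pblock trivL BL zB).
by rewrite (fingraph.orbitE (fcycle_next_perm uL) uL (mem_head _ _)) /= eqxx rot0.
Qed.

Section OneCoPart.
Variable P : coPart r.
Local Notation s := (sval P).2.

Lemma coPart_partition : partition (blocks P) [set: 'I_r].
Proof. by case/and3P: (svalP P). Qed.

Lemma coPart_perm_out X : X \notin blocks P -> s X = X.
Proof. by case/and3P: (svalP P) => _ /forallP/(_ X)/implyP fixX _ /fixX/eqP. Qed.

Lemma coPart_fconnect X Y : X \in blocks P -> Y \in blocks P -> fconnect s X Y.
Proof.
case/and3P: (svalP P) => _ _ /forall_inP conn XP YP.
exact: (forall_inP (conn X XP) Y YP).
Qed.

Lemma coPart_perm_in X : X \in blocks P -> s X \in blocks P.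
Proof.
move=> XP; apply: contraT => sXnP.
have /perm_inj sXX := coPart_perm_out sXnP.
by rewrite sXX XP in sXnP.
Qed.

Lemma coPart_pblock_mem : pblock (blocks P) z \in blocks P.
Proof.
by case/and3P: coPart_partition => /eqP cov _ _; rewrite pblock_mem // cov inE.
Qed.

Lemma mem_cut_seq Y : (Y \in cut_seq P) = (Y \in blocks P).
Proof.
apply/idP/idP => [|YP].
  by case/trajectP=> i _ ->; elim: i => [|i IHi] /=;
    [exact: coPart_pblock_mem | exact: coPart_perm_in].
by rewrite -fconnect_orbit coPart_fconnect ?coPart_pblock_mem.
Qed.

Lemma blocks_cut_seq : blocks P = [set X in cut_seq P].
Proof. by apply/setP => Y; rewrite inE mem_cut_seq. Qed.

Lemma card_blocks_cut_seq : #|blocks P| = size (cut_seq P).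
Proof. by rewrite blocks_cut_seq cardsE (card_uniqP (orbit_uniq _ _)). Qed.

Lemma rooted_cut_seq : rooted_cover (cut_seq P).
Proof.
case/and3P: coPart_partition => /eqP cov triv nzP.
apply/andP; split; last first.
  by rewrite /cut_seq /fingraph.orbit -orderSpred /= mem_pblock cov inE.
apply/andP; split; first by rewrite mem_cut_seq.
apply/forallP => x; apply/eqP.
rewrite (@eq_in_count _ _ (pred1 (pblock (blocks P) x))).
  by rewrite count_uniq_mem ?orbit_uniq // mem_cut_seq pblock_mem // cov inE.
move=> Y; rewrite mem_cut_seq => YP /=; apply/idP/eqP => [xY|->].
  by rewrite (def_pblock triv YP xY).
by rewrite mem_pblock cov inE.
Qed.

Lemma cut_seqK P0 : insubd P0 (coPart_of_seq (cut_seq P)) = P.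
Proof.
have [coverL _] := andP rooted_cut_seq.
apply: val_inj; rewrite insubdK; last exact: is_coPart_of_seq.
rewrite [RHS]surjective_pairing; congr (_, _).
  exact: esym blocks_cut_seq.
apply/permP => Y; rewrite next_permE ?orbit_uniq //.
have [YL|YnL] := boolP (Y \in cut_seq P).
  by rewrite (nextE (cycle_orbit (@perm_inj _ s) _) YL).
by rewrite next_nth (negbTE YnL) coPart_perm_out // -mem_cut_seq.
Qed.

Local Open Scope ring_scope.

Lemma tpsiQ_cut_seq psi Q : tpsiQ psi Q P = \prod_(I <- cut_seq P) psiQ psi Q I.
Proof.
rewrite /tpsiQ blocks_cut_seq big_uniq ?orbit_uniq //.
by apply: eq_bigl => X; rewrite inE.
Qed.
End OneCoPart.
End CutSeq.

Section SplitMergeCoPart.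
Variables (r : nat) (z : 'I_r) (V : {set 'I_r}).
Hypothesis zV : z \in V.

Definition split_merge_coPart (P : coPart r) : coPart r :=
  insubd P (coPart_of_seq (split_merge V (cut_seq z P))).

Lemma rooted_cover_split_merge L :
  rooted_cover z L -> rooted_cover z (split_merge V L).
Proof.
case/andP => coverL zL.
by rewrite /rooted_cover exact_cover_split_merge // mem_head_split_merge.
Qed.

Lemma cut_seq_split_merge_coPart P :
  cut_seq z (split_merge_coPart P) = split_merge V (cut_seq z P).
Proof.
by rewrite cut_seq_insubd // rooted_cover_split_merge // rooted_cut_seq.
Qed.

Lemma split_merge_coPartK : involutive split_merge_coPart.
Proof.
move=> P; rewrite {1}/split_merge_coPart cut_seq_split_merge_coPart split_mergeK.
  exact: cut_seqK.
by case/andP: (rooted_cut_seq z P) => /andP[].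
Qed.

Lemma odd_card_split_merge_coPart (y : 'I_r) P : y \notin V ->
  odd #|blocks (split_merge_coPart P)| = ~~ odd #|blocks P|.
Proof.
move=> yV; rewrite !(card_blocks_cut_seq z) cut_seq_split_merge_coPart.
have /andP[coverL zL] := rooted_cut_seq z P.
apply: odd_size_split_merge.
  by rewrite -setI_eq0; apply/set0Pn; exists z; rewrite inE zL.
have /hasP[B BL yB] : has (fun B : {set 'I_r} => y \in B) (cut_seq z P).
  by rewrite has_count (exact_cover_count y coverL).
by apply/hasP; exists B => //; apply: contra yV => /subsetP; apply.
Qed.

Local Open Scope ring_scope.

Lemma tpsiQ_split_merge_coPart psi Q P :
  (forall X, psiQ psi Q X = psiQ psi Q (X :&: V) * psiQ psi Q (X :\: V)) ->
  tpsiQ psi Q (split_merge_coPart P) = tpsiQ psi Q P.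
Proof.
move=> psiQV.
by rewrite !(tpsiQ_cut_seq z) cut_seq_split_merge_coPart big_split_merge.
Qed.
End SplitMergeCoPart.

Lemma exists_notin_block (T : finType) (Q : {set {set T}}) (V : {set T}) :
  partition Q [set: T] -> 1 < #|Q| -> V \in Q -> exists y, y \notin V.
Proof.
case/and3P=> _ trivQ nzQ Q2 VQ.
have /set0Pn[J] : Q :\ V != set0.
  by move: Q2; rewrite (cardsD1 V) VQ add1n ltnS card_gt0.
rewrite !inE => /andP[neqJV JQ].
have /set0Pn[y yJ] : J != set0 by apply: contraNneq nzQ => <-.
by exists y; rewrite (disjointFr (trivIsetP trivQ J V JQ VQ neqJV) yJ).
Qed.

Section PsiQFactor.
Local Open Scope ring_scope.

Lemma psiQ_setID (r : nat) (psi : {set 'I_r} -> R) (Q : {set {set 'I_r}}) V X :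
  psi set0 = 1 -> trivIset Q -> V \in Q ->
  psiQ psi Q X = psiQ psi Q (X :&: V) * psiQ psi Q (X :\: V).
Proof.
move=> psi0 trivQ VQ; rewrite /psiQ -big_split; apply: eq_bigr => J JQ /=.
have [->|neqJV] := eqVneq J V.
  have -> : (X :\: V) :&: V = set0.
    by rewrite setDE -setIA [~: V :&: V]setIC setICr setI0.
  by rewrite psi0 mulr1 -setIA setIid.
have dVJ : [disjoint V & J] by rewrite disjoint_sym; apply: (trivIsetP trivQ).
have sJCV : J \subset ~: V by rewrite -disjoints_subset disjoint_sym.
rewrite -setIA (disjoint_setI0 dVJ) setI0 psi0 mul1r.
by rewrite setDE -setIA [~: V :&: J]setIC (setIidPl sJCV).
Qed.
End PsiQFactor.

Theorem lemma8p2 (r : nat) (Q : {set {set 'I_r}}) :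
  3 <= r -> partition Q [set: 'I_r] -> 2 <= #|Q| ->
  exists tau : coPart r -> coPart r,
    [/\ bijective tau,
        (forall P : coPart r, #|blocks (tau P)| = (#|blocks P|).+1 %[mod 2]) &
        (forall psi : {set 'I_r} -> R, psi set0 = 1%R ->
           forall P : coPart r, tpsiQ psi Q (tau P) = tpsiQ psi Q P)].
Proof.
move=> r3 partQ Q2.
(* The bound on r is only needed to name a point. *)
pose z : 'I_r := Ordinal (leq_trans (isT : 0 < 3) r3).
have [covQ trivQ _] := and3P partQ.
pose V := pblock Q z.
have VQ : V \in Q by rewrite pblock_mem // (eqP covQ) inE.
have zV : z \in V by rewrite mem_pblock (eqP covQ) inE.
have [y yV] := exists_notin_block partQ Q2 VQ.
exists (split_merge_coPart z V); split.
- exact: inv_bij (split_merge_coPartK zV).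
- by move=> P; rewrite !modn2 oddS (odd_card_split_merge_coPart zV _ yV).
- move=> psi psi0 P; apply: (tpsiQ_split_merge_coPart zV) => X.
  exact: psiQ_setID.
Qed.
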